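(* There exist dimensions $D_1,D_2\ge1$, data points, a bandwidth $\sigma>0$, a query index $i$, candidate sets $S_1(i),S_2(i)$ and $S(i)=S_1(i)\cup S_2(i)$, and indices $j\ne k$ in $S(i)$ with the following properties: - $k\notin\mathcal{N}_1(i)$ and $k\notin\mathcal{N}_2(i)$; - $j$ eliminates $k$ in channel 1 but not in channel 2, i.e., $K^{(1)}_{ik}<K^{(1)}_{ij}K^{(1)}_{jk}$ and $K^{(2)}_{ik}>K^{(2)}_{ij}K^{(2)}_{jk}$; - nevertheless, $k\in\mathcal{N}(i)$. In other words, a point that is not an NNK neighbor of $x_i$ in any channel, but is not eliminated by the same point in all channels, can be an NNK neighbor in the aggregate space.
   Context: Data and channels: $x_1,\dots,x_N\in\mathbb{R}^{D}$, each written as $x_a=\begin{bmatrix}x_a^{(1)}\\ x_a^{(2)}\end{bmatrix}$ with $x_a^{(1)}\in\mathbb{R}^{D_1}$, $x_a^{(2)}\in\mathbb{R}^{D_2}$, $D_1+D_2=D$. Kernel values: - Channel kernel: for $c=1,2$, $K^{(c)}_{ab}=\exp\!\big(-\|x_a^{(c)}-x_b^{(c)}\|^2/(2\sigma^2)\big)$. - Aggregate kernel: $K_{ab}=\exp\!\big(-\|x_a-x_b\|^2/(2\sigma^2)\big)=K^{(1)}_{ab}K^{(2)}_{ab}$. $K$-nearest-neighbor candidate set: for channel $c$, $S_c(i)\subseteq\{1,\dots,N\}\setminus\{i\}$ with $|S_c(i)|=K$ and $\|x_i^{(c)}-x_l^{(c)}\|\le\|x_i^{(c)}-x_m^{(c)}\|$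 for all $l\in S_c(i)$ and all $m\notin S_c(i)\cup\{i\}$. NNK neighborhood: given a query $i$, a candidate set $S$ and kernel values $(K_{ab})$, it is $$\{\,j\in S:\ K_{ij}>K_{ik}K_{jk}\ \text{for every }k\in S\setminus\{j\}\,\}.$$ A candidate $k$ is eliminated by $j$ when $K_{ik}<K_{ij}K_{jk}$. This is the kernel-ratio-interval criterion, equivalent to $\theta_k=0$ in the two-candidate non-negative kernel regression problem over $\{j,k\}$. Notation: - $\mathcal{N}_c(i)$ is the NNK neighborhood computed with $S_c(i)$ and $K^{(c)}$. - $\mathcal{N}(i)$ is the NNK neighborhood computed with $S(i)$ and $K$. *)

From HB Require Import structures.
From mathcomp Require Import all_boot all_order all_algebra.
From mathcomp Require Import Rstruct.
From Stdlib Require Import Rdefinitions Rtrigo_def.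
Set Implicit Arguments. Unset Strict Implicit. Unset Printing Implicit Defensive.
Import Order.TTheory GRing.Theory Num.Theory.
Local Open Scope ring_scope.

Notation R := Rdefinitions.R.

Definition sqdist (n : nat) (u v : 'rV[R]_n) : R :=
  \sum_(d < n) (u 0 d - v 0 d) ^+ 2.

Definition edist (n : nat) (u v : 'rV[R]_n) : R := Num.sqrt (sqdist u v).

Definition gker (sigma : R) (n : nat) (u v : 'rV[R]_n) : R :=
  exp (- (sqdist u v) / (2 * sigma ^+ 2)).

Definition chan1 (D1 D2 : nat) (x : 'rV[R]_(D1 + D2)) : 'rV[R]_D1 := lsubmx x.
Definition chan2 (D1 D2 : nat) (x : 'rV[R]_(D1 + D2)) : 'rV[R]_D2 := rsubmx x.

Definition is_knn (N : nat) (dist : 'I_N -> 'I_N -> R) (i : 'I_N) (K : nat)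
    (S : {set 'I_N}) : Prop :=
  [/\ i \notin S, #|S| = K &
      forall l m, l \in S -> m \notin S -> m != i -> dist i l <= dist i m].

Definition nnk (N : nat) (Kv : 'I_N -> 'I_N -> R) (i : 'I_N) (S : {set 'I_N})
    : {set 'I_N} :=
  [set j in S | [forall k in S, (k != j) ==> (Kv i k * Kv j k < Kv i j)]].

From HB Require Import structures.
From mathcomp Require Import all_boot all_order all_algebra.
From mathcomp Require Import Rstruct.
From Stdlib Require Import Rdefinitions Rtrigo_def Rpower.
From mathcomp Require Import ring lra.
Set Implicit Arguments. Unset Strict Implicit. Unset Printing Implicit Defensive.
Import Order.TTheory GRing.Theory Num.Theory.
Local Open Scope ring_scope.

(* For the Gaussian kernel, [j] eliminates [k] for the query [i] exactly when
   ||x_i - x_j||^2 + ||x_j - x_k||^2 < ||x_i - x_k||^2, i.e. when the angle at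
   x_j of the triangle x_i x_j x_k is obtuse.  Squared distances add up over
   the channels, so an angle that is obtuse in one channel can be acute in the
   aggregate space.  In R^(1+1) take x_0 = (0,0), x_1 = (1,-1), x_2 = (2,1),
   x_3 = (10,0), query 0, candidates S_1 = {1,2} and S_2 = {1,3}, j = 1 and
   k = 2: in channel 1, x_1 lies between x_0 and x_2 and eliminates it; x_2 is
   no candidate in channel 2, where x_1 does not eliminate it either; in the
   plane the angle at x_1 is acute (2 + 5 > 5) and x_3 is too far away to
   eliminate x_2. *)

Lemma ltr_exp (a b : R) : (exp a < exp b) = (a < b).
Proof.
by apply/idP/idP => /RltP ab; apply/RltP; [exact: exp_lt_inv | exact: exp_increasing].
Qed.

Lemma sqdist_sym n (u v : 'rV[R]_n) : sqdist u v = sqdist v u.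
Proof. by apply: eq_bigr => d _; rewrite -sqrrN opprB. Qed.

Lemma sqdist_ge0 n (u v : 'rV[R]_n) : 0 <= sqdist u v.
Proof. by apply: sumr_ge0 => d _; rewrite sqr_ge0. Qed.

Lemma sqdist_row1 (p q : R) : sqdist (\row_(d < 1) p) (\row_(d < 1) q) = (p - q) ^+ 2.
Proof. by rewrite /sqdist big_ord1 !mxE. Qed.

Lemma sqdist_chan D1 D2 (x y : 'rV[R]_(D1 + D2)) :
  sqdist x y = sqdist (chan1 x) (chan1 y) + sqdist (chan2 x) (chan2 y).
Proof.
rewrite /sqdist /chan1 /chan2 big_split_ord /=.
by congr (_ + _); apply: eq_bigr => d _; rewrite !mxE.
Qed.

Lemma edist_le n m (u v : 'rV[R]_n) (u' v' : 'rV[R]_m) :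
  (edist u v <= edist u' v') = (sqdist u v <= sqdist u' v').
Proof. by rewrite ler_sqrt // sqdist_ge0. Qed.

Section GaussianKernel.

Variables (sigma : R) (n : nat).
Hypothesis sigma_neq0 : sigma != 0.

Lemma gker_sym (u v : 'rV[R]_n) : gker sigma u v = gker sigma v u.
Proof. by rewrite /gker sqdist_sym. Qed.

Lemma gkerM (u v w : 'rV[R]_n) :
  gker sigma u v * gker sigma v w = exp (- (sqdist u v + sqdist v w) / (2 * sigma ^+ 2)).
Proof. by rewrite /gker expRD; congr exp; rewrite !RealsE; ring. Qed.

Lemma ltr_gker_exp (a b : R) :
  (exp (- a / (2 * sigma ^+ 2)) < exp (- b / (2 * sigma ^+ 2))) = (b < a).
Proof.
rewrite ltr_exp !RealsE.
have s2_gt0 : 0 < (nat_of_pos 2)%:R * sigma ^+ 2.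
  by rewrite mulr_gt0 // exprn_even_gt0.
by rewrite ltr_pM2r ?invr_gt0 // ltrN2.
Qed.

Lemma gker_lt_mul (u v w : 'rV[R]_n) :
  (gker sigma u w < gker sigma u v * gker sigma v w) =
  (sqdist u v + sqdist v w < sqdist u w).
Proof. by rewrite gkerM ltr_gker_exp. Qed.

Lemma gker_mul_lt (u v w : 'rV[R]_n) :
  (gker sigma u v * gker sigma v w < gker sigma u w) =
  (sqdist u w < sqdist u v + sqdist v w).
Proof. by rewrite gkerM ltr_gker_exp. Qed.

End GaussianKernel.

Lemma nnk_eliminated N (Kv : 'I_N -> 'I_N -> R) (i j k : 'I_N) (S : {set 'I_N}) :
  j \in S -> j != k -> Kv i k <= Kv i j * Kv k j -> k \notin nnk Kv i S.
Proof.
move=> jS jk elim_k; rewrite inE negb_and negb_forall; apply/orP; right.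
by apply/existsP; exists j; rewrite jS jk /= -leNgt.
Qed.

Lemma nnk_sub N (Kv : 'I_N -> 'I_N -> R) (i : 'I_N) (S : {set 'I_N}) :
  nnk Kv i S \subset S.
Proof. by apply/subsetP => k; rewrite inE => /andP[]. Qed.

Lemma mem_nnk_gker N n (sigma : R) (f : 'I_N -> 'rV[R]_n) (i k : 'I_N)
    (S : {set 'I_N}) :
  sigma != 0 ->
  (k \in nnk (fun a b => gker sigma (f a) (f b)) i S) =
  (k \in S) && [forall m in S, (m != k) ==>
     (sqdist (f i) (f k) < sqdist (f i) (f m) + sqdist (f m) (f k))].
Proof.
move=> sigma_neq0; rewrite inE; congr (_ && _).
by apply: eq_forallb => m; rewrite (gker_sym _ (f k)) (gker_mul_lt sigma_neq0).
Qed.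

Section Example.

Definition coord1 (a : 'I_4) : R := [:: 0; 1; 2; 10]`_a.
Definition coord2 (a : 'I_4) : R := [:: 0; -1; 1; 0]`_a.

Definition pt (a : 'I_4) : 'rV[R]_(1 + 1) :=
  row_mx (\row_(d < 1) coord1 a) (\row_(d < 1) coord2 a).

Definition o0 : 'I_4 := @Ordinal 4 0 isT.
Definition o1 : 'I_4 := @Ordinal 4 1 isT.
Definition o2 : 'I_4 := @Ordinal 4 2 isT.
Definition o3 : 'I_4 := @Ordinal 4 3 isT.

Lemma ord4P (m : 'I_4) : [\/ m = o0, m = o1, m = o2 | m = o3].
Proof.
case: m => [[|[|[|[|m]]]] lt_m] //;
  [apply: Or41 | apply: Or42 | apply: Or43 | apply: Or44]; exact: val_inj.
Qed.

Lemma sqdist_chan1_pt a b :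
  sqdist (chan1 (pt a)) (chan1 (pt b)) = (coord1 a - coord1 b) ^+ 2.
Proof. by rewrite /chan1 !row_mxKl sqdist_row1. Qed.

Lemma sqdist_chan2_pt a b :
  sqdist (chan2 (pt a)) (chan2 (pt b)) = (coord2 a - coord2 b) ^+ 2.
Proof. by rewrite /chan2 !row_mxKr sqdist_row1. Qed.

Lemma sqdist_pt a b :
  sqdist (pt a) (pt b) = (coord1 a - coord1 b) ^+ 2 + (coord2 a - coord2 b) ^+ 2.
Proof. by rewrite sqdist_chan sqdist_chan1_pt sqdist_chan2_pt. Qed.

Lemma pt_knn1 :
  is_knn (fun a b => edist (chan1 (pt a)) (chan1 (pt b))) o0 2 [set o1; o2].
Proof.
split=> [||l m]; rewrite ?inE ?cards2 // => lS mS mi.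
rewrite edist_le !sqdist_chan1_pt.
by case: (ord4P m) mS mi => -> // _ _; case/orP: lS => /eqP->; rewrite /coord1 /=; lra.
Qed.

Lemma pt_knn2 :
  is_knn (fun a b => edist (chan2 (pt a)) (chan2 (pt b))) o0 2 [set o1; o3].
Proof.
split=> [||l m]; rewrite ?inE ?cards2 // => lS mS mi.
rewrite edist_le !sqdist_chan2_pt.
by case: (ord4P m) mS mi => -> // _ _; case/orP: lS => /eqP->; rewrite /coord2 /=; lra.
Qed.

Variable sigma : R.
Hypothesis sigma_neq0 : sigma != 0.

Local Notation K1 a b := (gker sigma (chan1 (pt a)) (chan1 (pt b))).
Local Notation K2 a b := (gker sigma (chan2 (pt a)) (chan2 (pt b))).
Local Notation K a b := (gker sigma (pt a) (pt b)).

Lemma pt_elim1 : K1 o0 o2 < K1 o0 o1 * K1 o1 o2.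
Proof. by rewrite (gker_lt_mul sigma_neq0) !sqdist_chan1_pt /coord1 /=; lra. Qed.

Lemma pt_not_elim2 : K2 o0 o1 * K2 o1 o2 < K2 o0 o2.
Proof. by rewrite (gker_mul_lt sigma_neq0) !sqdist_chan2_pt /coord2 /=; lra. Qed.

Lemma pt_notin_nnk1 : o2 \notin nnk (fun a b => K1 a b) o0 [set o1; o2].
Proof.
apply: (nnk_eliminated (j := o1)); [by rewrite !inE eqxx | by [] |].
by rewrite (gker_sym _ (chan1 (pt o2))); exact: ltW pt_elim1.
Qed.

Lemma pt_notin_nnk2 : o2 \notin nnk (fun a b => K2 a b) o0 [set o1; o3].
Proof. by apply/negP => /(subsetP (nnk_sub _ _ _)); rewrite !inE. Qed.

Lemma pt_nnk : o2 \in nnk (fun a b => K a b) o0 ([set o1; o2] :|: [set o1; o3]).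
Proof.
rewrite mem_nnk_gker // !inE /=; apply/forallP => m; rewrite !inE.
by case: (ord4P m) => -> //=; rewrite !sqdist_pt /coord1 /coord2 /=; lra.
Qed.

End Example.

Theorem lemma1 :
  exists (D1 D2 N : nat) (x : 'I_N -> 'rV[R]_(D1 + D2)) (sigma : R)
         (i : 'I_N) (Kn : nat) (S1 S2 : {set 'I_N}) (j k : 'I_N),
    let K1 := fun a b => gker sigma (chan1 (x a)) (chan1 (x b)) in
    let K2 := fun a b => gker sigma (chan2 (x a)) (chan2 (x b)) in
    let K := fun a b => gker sigma (x a) (x b) in
    let S := S1 :|: S2 in
    (1 <= D1)%nat /\ (1 <= D2)%nat /\ 0 < sigma /\
    is_knn (fun a b => edist (chan1 (x a)) (chan1 (x b))) i Kn S1 /\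
    is_knn (fun a b => edist (chan2 (x a)) (chan2 (x b))) i Kn S2 /\
    j \in S /\ k \in S /\ j != k /\
    k \notin nnk K1 i S1 /\ k \notin nnk K2 i S2 /\
    K1 i k < K1 i j * K1 j k /\ K2 i j * K2 j k < K2 i k /\
    k \in nnk K i S.
Proof.
exists 1%N, 1%N, 4%N, pt, 1, o0, 2%N, [set o1; o2], [set o1; o3], o1, o2.
move=> K1 K2 K S.
have one_neq0 : 1 != 0 :> R := oner_neq0 _.
split=> //; split=> //; split; first exact: ltr01.
split; first exact: pt_knn1.
split; first exact: pt_knn2.
split; first by rewrite !inE eqxx.
split; first by rewrite !inE eqxx.
split; first by [].
split; first exact: (pt_notin_nnk1 one_neq0).
split; first exact: pt_notin_nnk2.
split; first exact: (pt_elim1 one_neq0).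
by split; [exact: (pt_not_elim2 one_neq0) | exact: (pt_nnk one_neq0)].
Qed.
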